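(* Let $(\Gamma,M)$ be an E-GCM graph which is unital OA-cyclic, with Coxeter group $W$. Then for all $w\in W$, \[ f_1\,\ell(w)\le |N_M(w)|\le f_2\,\ell(w),\] where $f_1$ and $f_2$ are respectively the minimum and the maximum of the integers $f_{\Gamma',M'}$ as $(\Gamma',M')$ ranges over the OA-connected components of $(\Gamma,M)$.
   Context: E-GCM $M=(M_{ij})_{i,j\in I_n}$: real, $M_{ii}=2$, $M_{ij}\le0$ ($i\ne j$), $M_{ij}\ne0\iff M_{ji}\ne0$, nonzero $M_{ij}M_{ji}$ either $\ge4$ or $=4\cos^2(\pi/m)$ with $m\ge3$ integer; nodes $\gamma_i$, adjacent iff $M_{ij}\ne 0$. Coxeter group $W$: generators $s_i$, $s_i^2=e$, $(s_is_j)^{m_{ij}}=e$, with $m_{ij}=k$ if $M_{ij}M_{ji}=4\cos^2(\pi/k)$ ($k\ge2$), $m_{ij}=\infty$ if $M_{ij}M_{ji}\ge4$; $\ell$ = length. $W$ acts on real $V$ with basis $(\alpha_i)$ via $s_i.\alpha_j=\alpha_j-M_{ij}\alpha_i$; $\Phi_M=\{w.\alpha_i\}$; $\Phi_M^+$ ($\Phi_M^-$) = roots with all coefficients $\ge 0$ ($\le0$). $N_M(w):=\{\alpha\in\Phi_M^+: w.\alpha\in\Phi_M^-\}$. Odd-adjacent: $m_{ij}$ odd; then $K_{ji}:=-M_{ji}/(2\cos(\pi/m_{ij}))$. OA-path: sequence of nodes $[\gamma_{i_0},\dots,\gamma_{i_p}]$ with consecutive ones odd-adjacent, $\Pi_{\mathcal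 P}=K_{i_pi_{p-1}}\cdots K_{i_1i_0}$; OA-cycle: $\gamma_{i_p}=\gamma_{i_0}$. $(\Gamma,M)$ is unital OA-cyclic if $\Pi_{\mathcal C}=1$ for every OA-cycle. OA-connected component: induced E-GCM subgraph on a maximal set of nodes pairwise joinable by OA-paths. For an OA-connected component $(\Gamma',M')$ (unital OA-cyclic here), $f_{\Gamma',M'}:=|\{K\alpha_x:K\in\mathbb{R}\}\cap\Phi_M^+|$ for any node $\gamma_x$ of $(\Gamma',M')$; this number is finite and independent of the choice of $x$. *)

From HB Require Import structures.
From mathcomp Require Import all_boot all_order all_algebra.
From mathcomp Require Import all_classical all_reals trigo.
Set Implicit Arguments. Unset Strict Implicit. Unset Printing Implicit Defensive.
Import Order.TTheory GRing.Theory Num.Theory.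
Local Open Scope ring_scope.

Section EGCM.
Variables (R : realType) (n : nat).
Implicit Types (M : 'M[R]_n) (i j x y z : 'I_n).

Definition fourcos2 (k : nat) : R := 4 * (cos (pi / k%:R)) ^+ 2.

Definition is_EGCM M : Prop :=
  (forall i, M i i = 2) /\
  (forall i j, i != j -> M i j <= 0) /\
  (forall i j, M i j != 0 <-> M j i != 0) /\
  (forall i j, i != j -> M i j * M j i != 0 ->
      4 <= M i j * M j i \/ exists m : nat, (3 <= m)%N /\ M i j * M j i = fourcos2 m).

(* m_ij = k (k >= 2) iff i != j and M_ij M_ji = 4 cos^2(pi/k); m_ii = 1;
   m_ij = infinity otherwise (i.e. when M_ij M_ji >= 4). *)
Definition mcox M i j (k : nat) : Prop :=
  (i = j /\ k = 1%N) \/ (i != j /\ (2 <= k)%N /\ M i j * M j i = fourcos2 k).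

(* Coxeter group W given by its presentation: words in the generators
   (a word [:: i1; ...; ik] stands for s_i1 ... s_ik), modulo the
   congruence generated by the relators (s_i s_j)^{m_ij} for finite m_ij. *)
Definition relator M (r : seq 'I_n) : Prop :=
  exists i j k, mcox M i j k /\ r = flatten (nseq k [:: i; j]).

Inductive weq M : seq 'I_n -> seq 'I_n -> Prop :=
| weq_refl u : weq M u u
| weq_sym u v : weq M u v -> weq M v u
| weq_trans u v t : weq M u v -> weq M v t -> weq M u t
| weq_rel u r v : relator M r -> weq M (u ++ r ++ v) (u ++ v).

Lemma wlen_ex M (w : seq 'I_n) :
  exists k, `[< exists u, weq M u w /\ size u = k >].
Proof. by exists (size w); apply/asboolP; exists w; split=> //; apply: weq_refl. Qed.

Definition wlen M (w : seq 'I_n) : nat := ex_minn (wlen_ex M w).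

(* The space V with basis (alpha_i), as row vectors of coefficients. *)
Definition alpha i : 'rV[R]_n := \row_j (if j == i then 1 else 0).

(* s_i . v = v - (sum_j M_ij v_j) alpha_i, so that s_i.alpha_j = alpha_j - M_ij alpha_i *)
Definition sact M i (v : 'rV[R]_n) : 'rV[R]_n :=
  v - (\sum_j M i j * v 0 j) *: alpha i.

Definition wact M (w : seq 'I_n) (v : 'rV[R]_n) : 'rV[R]_n := foldr (sact M) v w.

Definition is_root M (a : 'rV[R]_n) : Prop := exists w i, a = wact M w (alpha i).
Definition is_pos_root M a : Prop := is_root M a /\ forall j, 0 <= a 0 j.
Definition is_neg_root M a : Prop := is_root M a /\ forall j, a 0 j <= 0.

Definition NM M (w : seq 'I_n) (a : 'rV[R]_n) : Prop :=
  is_pos_root M a /\ is_neg_root M (wact M w a).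

Definition oddadj M i j (k : nat) : Prop := mcox M i j k /\ i != j /\ odd k.

Definition Kc M j i (k : nat) : R := - M j i / (2 * cos (pi / k%:R)).

(* oa_walk M x y c : there is an OA-path [x = gamma_i0, ..., gamma_ip = y]
   with Pi_P = c = K_{ip i(p-1)} ... K_{i1 i0} *)
Inductive oa_walk M : 'I_n -> 'I_n -> R -> Prop :=
| oa_nil x : oa_walk M x x 1
| oa_cons x y z c k : oa_walk M x y c -> oddadj M y z k ->
    oa_walk M x z (Kc M z y k * c).

Definition unital_OA_cyclic M : Prop := forall x c, oa_walk M x x c -> c = 1.

Definition fcount M x (f : nat) : Prop :=
  exists s : seq 'rV[R]_n, uniq s /\ size s = f /\
    forall a, a \in s <-> ((exists K : R, a = K *: alpha x) /\ is_pos_root M a).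

End EGCM.

From HB Require Import structures.
From mathcomp Require Import all_boot all_order all_algebra.
From mathcomp Require Import all_classical all_reals trigo.
From mathcomp Require Import ring lra zify.
Import Order.TTheory GRing.Theory Num.Theory.
Local Open Scope ring_scope.
Set Implicit Arguments. Unset Strict Implicit. Unset Printing Implicit Defensive.

(* The argument is the classical theory of the root system of the geometric
   representation (cf. Humphreys, Reflection groups and Coxeter groups, 5.4).
   Along an alternating word in s_i, s_j the coordinates of the image of alpha_i
   are Chebyshev numbers sin(k pi/m)/sin(pi/m) with m = m_ij, or nondecreasing
   sequences when M_ij M_ji >= 4.  This rank-two computation shows both that the
   relators (s_i s_j)^m_ij act trivially, so that W acts on V, and, by induction
   on l(w) through the parabolic subgroup <s_i, s_j>, that w.alpha_i >= 0 whenever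
   l(w s_i) > l(w).  Hence every root is positive or negative, s_i permutes the
   positive roots that are not multiples of alpha_i, and for a reduced word u i
     N(u i) = s_i N(u) + (R alpha_i  /\  Phi^+)   (disjoint union).
   So |N(w)| is the sum of the f(i_k) along a reduced word i_1 ... i_l for w,
   which lies between f_1 l(w) and f_2 l(w). *)

Section CoxeterWords.
Variables (R : realType) (n : nat) (M : 'M[R]_n).
Implicit Types (u v w : seq 'I_n) (i j x y : 'I_n).

Lemma weq_catl p u v : weq M u v -> weq M (p ++ u) (p ++ v).
Proof.
elim=> [u0|u0 v0 _|u0 v0 t0 _ IH1 _ IH2|u0 r v0 Hr].
- exact: weq_refl.
- exact: weq_sym.
- exact: weq_trans IH1 IH2.
- by have := weq_rel (p ++ u0) v0 Hr; rewrite -!catA.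
Qed.

Lemma weq_catr q u v : weq M u v -> weq M (u ++ q) (v ++ q).
Proof.
elim=> [u0|u0 v0 _|u0 v0 t0 _ IH1 _ IH2|u0 r v0 Hr].
- exact: weq_refl.
- exact: weq_sym.
- exact: weq_trans IH1 IH2.
- by have := weq_rel u0 (v0 ++ q) Hr; rewrite -!catA.
Qed.

Lemma weq_cat u u' v v' : weq M u u' -> weq M v v' -> weq M (u ++ v) (u' ++ v').
Proof. by move=> /(weq_catr v) Hu /(weq_catl u') Hv; apply: weq_trans Hu Hv. Qed.

Lemma weq_cancel u i v : weq M (u ++ [:: i; i] ++ v) (u ++ v).
Proof. by apply: weq_rel; exists i, i, 1%N; split=> //; left. Qed.

Lemma weq_rcons2 w i : weq M (rcons (rcons w i) i) w.
Proof. by have := weq_cancel w i [::]; rewrite -!cats1 -catA !cats0. Qed.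

Lemma wlen_min u w : weq M u w -> (wlen M w <= size u)%N.
Proof. by move=> Hu; rewrite /wlen; case: ex_minnP => k _; apply; apply/asboolP; exists u. Qed.

Lemma wlen_witness w : exists u, weq M u w /\ size u = wlen M w.
Proof. by rewrite /wlen; case: ex_minnP => k /asboolP [u Hu] _; exists u. Qed.

Lemma wlen_size w : (wlen M w <= size w)%N.
Proof. exact/wlen_min/weq_refl. Qed.

Lemma wlen_weq u w : weq M u w -> wlen M u = wlen M w.
Proof.
move=> Huw; apply/eqP; rewrite eqn_leq.
have [u' [Hu' Su']] := wlen_witness u; have [w' [Hw' Sw']] := wlen_witness w.
have := wlen_min (weq_trans Hw' (weq_sym Huw)); have := wlen_min (weq_trans Hu' Huw).
by rewrite Su' Sw' => -> ->.
Qed.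

Lemma wlen_cat u v : (wlen M (u ++ v) <= wlen M u + wlen M v)%N.
Proof.
have [u' [Hu <-]] := wlen_witness u; have [v' [Hv <-]] := wlen_witness v.
by rewrite -size_cat; apply/wlen_min/weq_cat.
Qed.

Lemma odd_size_weq u v : weq M u v -> odd (size u) = odd (size v).
Proof.
elim=> [//|u0 v0 _ -> //|u0 v0 t0 _ -> _ -> //|u0 r v0 [i [j [k [_ ->]]]]].
by rewrite !size_cat !oddD size_flatten /shape map_nseq sumn_nseq oddM.
Qed.

Lemma odd_wlen w : odd (wlen M w) = odd (size w).
Proof. by have [u [Hu <-]] := wlen_witness w; apply: odd_size_weq. Qed.

Lemma wlen_rcons w i :
  wlen M (rcons w i) = (wlen M w).+1 \/ wlen M w = (wlen M (rcons w i)).+1.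
Proof.
have Hup : (wlen M (rcons w i) <= wlen M w + 1)%N.
  by rewrite -cats1; apply: leq_trans (wlen_cat _ _) _; rewrite leq_add2l wlen_size.
have Hdown : (wlen M w <= wlen M (rcons w i) + 1)%N.
  rewrite -(wlen_weq (weq_rcons2 w i)) -[rcons _ i]cats1.
  by apply: leq_trans (wlen_cat _ _) _; rewrite leq_add2l wlen_size.
have Hparity : wlen M (rcons w i) != wlen M w.
  by apply/eqP => Heq; have := odd_wlen (rcons w i); rewrite Heq odd_wlen size_rcons /=; case: odd.
lia.
Qed.

Definition reduced w := wlen M w = size w.

Lemma reduced_cat u v : reduced (u ++ v) -> reduced u /\ reduced v.
Proof.
rewrite /reduced size_cat => Huv.
by have := wlen_cat u v; have := wlen_size u; have := wlen_size v; lia.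
Qed.

Lemma reduced_wlen_rcons w i : reduced (rcons w i) -> (wlen M w < wlen M (rcons w i))%N.
Proof.
move=> Hwi; have [Hw _] : reduced w /\ reduced [:: i] by apply: reduced_cat; rewrite cats1.
by move: Hw Hwi; rewrite /reduced size_rcons => -> ->.
Qed.

Lemma reduced_neq_adjacent u : reduced u -> sorted (fun x y => x != y) u.
Proof.
elim: u => // x [//|y u] IH Hxyu.
have [_ /IH Hyu] : reduced [:: x] /\ reduced (y :: u) by apply: reduced_cat.
apply/andP; split=> //; apply/eqP => Exy; subst y.
have /= := wlen_min (weq_sym (weq_cancel [::] x u)).
by move: Hxyu; rewrite /reduced => -> /=; lia.
Qed.

Lemma weq_wlen_eq0 w : wlen M w = 0%N -> weq M [::] w.
Proof. by move=> H0; have [[|x u] [Hu]] := wlen_witness w; rewrite H0. Qed.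

Lemma wlen_descent w : (0 < wlen M w)%N -> exists j, (wlen M (rcons w j) < wlen M w)%N.
Proof.
have [u [Hu Hs]] := wlen_witness w.
case/lastP: u Hu Hs => [|u j] Hu Hs; first by rewrite -Hs.
exists j; rewrite -Hs size_rcons ltnS; apply: wlen_min.
apply: weq_trans (weq_sym (weq_rcons2 u j)) _.
by rewrite -!cats1 in Hu *; apply: weq_catr.
Qed.

Lemma parabolic_factor w i j : (wlen M (rcons w j) < wlen M w)%N ->
  exists v vI : seq 'I_n, [/\ {subset vI <= [:: i; j]}, weq M (v ++ vI) w,
    wlen M w = (wlen M v + size vI)%N, (wlen M v < wlen M w)%N &
    forall x, x \in [:: i; j] -> (wlen M v < wlen M (rcons v x))%N].
Proof.
(* Choose such a length-additive factorisation w = v vI with v as short as possible. *)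
move=> Hj; pose factor k := `[< exists v vI : seq 'I_n, [/\ {subset vI <= [:: i; j]},
  weq M (v ++ vI) w, wlen M w = (wlen M v + size vI)%N & wlen M v = k] >].
have Hwj : factor (wlen M (rcons w j)).
  apply/asboolP; exists (rcons w j), [:: j]; split=> //.
  - by move=> x; rewrite !inE => ->; rewrite orbT.
  - by rewrite cats1; apply: weq_rcons2.
  - by have := wlen_rcons w j; rewrite /=; lia.
case: (ex_minnP (ex_intro factor _ Hwj)) => k /asboolP [v [vI [Hsub Hweq Hlen Hk]]] Hmin.
exists v, vI; split=> //; first by have := Hmin _ Hwj; lia.
move=> x Hx; case: (wlen_rcons v x) => [-> //|Hdown].
suff : (k <= wlen M (rcons v x))%N by lia.
apply/Hmin/asboolP; exists (rcons v x), (x :: vI); split=> //.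
- by move=> z; rewrite inE => /orP [/eqP -> //|/Hsub].
- by apply: weq_trans Hweq; rewrite -cats1 -catA; apply: weq_cancel.
- by rewrite Hlen Hdown /=; lia.
Qed.

End CoxeterWords.

Section AlternatingWords.
Variables (R : realType) (n : nat) (M : 'M[R]_n).
Implicit Types (u v w : seq 'I_n) (i j x y : 'I_n).

Fixpoint alt_word x y t : seq 'I_n :=
  if t is t'.+1 then (if odd t' then x else y) :: alt_word x y t' else [::].

Lemma size_alt_word x y t : size (alt_word x y t) = t.
Proof. by elim: t => //= t ->. Qed.

Lemma mem_alt_word x y t z : z \in alt_word x y t -> z \in [:: x; y].
Proof.
elim: t => //= t IH; rewrite inE => /orP [/eqP ->|/IH //].
by case: odd; rewrite !inE eqxx ?orbT.
Qed.

Lemma flatten_nseq_alt_word x y k : flatten (nseq k [:: x; y]) = alt_word x y k.*2.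
Proof. by elim: k => //= k ->; rewrite odd_double. Qed.

Lemma alt_word_rcons x y t : alt_word x y t.+1 = rcons (alt_word y x t) y.
Proof.
elim: t x y => // t IH x y.
transitivity ((if odd t.+1 then x else y) :: alt_word x y t.+1) => //.
by rewrite IH /=; case: (odd t).
Qed.

Lemma rev_alt_word x y t : rev (alt_word x y t) = if odd t then alt_word x y t else alt_word y x t.
Proof. by elim: t x y => // t IH x y; rewrite {1}alt_word_rcons rev_rcons IH /=; case: (odd t). Qed.

Lemma alt_word_addn x y p q :
  alt_word x y (p + q) = (if odd q then alt_word y x p else alt_word x y p) ++ alt_word x y q.
Proof.
elim: p => [|p IH]; first by case: (odd q).
by rewrite addSn /= IH oddD; case: (odd q); case: (odd p).
Qed.

Lemma weq_cat_rev u : weq M (u ++ rev u) [::].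
Proof.
elim: u => [|x u IH]; first exact: weq_refl.
have -> : (x :: u) ++ rev (x :: u) = [:: x] ++ (u ++ rev u) ++ [:: x].
  by rewrite rev_cons -cats1 /= -catA.
apply: weq_trans (weq_catl _ (weq_catr _ IH)) _.
by have := weq_cancel M [::] x [::]; rewrite !cats0.
Qed.

Lemma mcox_sym x y k : mcox M x y k -> mcox M y x k.
Proof.
case=> [[-> ->]|[Hxy [Hk E]]]; first by left.
by right; rewrite eq_sym mulrC.
Qed.

Lemma relator_alt_word x y k : mcox M x y k -> relator M (alt_word x y k.*2).
Proof. by move=> Hk; exists x, y, k; rewrite flatten_nseq_alt_word. Qed.

Lemma weq_braid x y m : relator M (alt_word x y m.*2) ->
  weq M (alt_word x y m) (alt_word y x m).
Proof.
move=> Hr; set A := if odd m then alt_word y x m else alt_word x y m.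
have Hrel : weq M (A ++ alt_word x y m) [::].
  by have := weq_rel [::] [::] Hr; rewrite cats0 -addnn alt_word_addn.
have HA : weq M A (rev (alt_word x y m)).
  have := weq_cat (weq_refl M A) (weq_cat_rev (alt_word x y m)).
  rewrite cats0 catA => /weq_sym/weq_trans; apply.
  by have := weq_catr (rev (alt_word x y m)) Hrel.
by move: HA; rewrite /A rev_alt_word; case: (odd m) => // /weq_sym.
Qed.

Lemma alt_word_not_reduced i j m t : mcox M i j m -> (0 < m <= t)%N ->
  ~ reduced M (rcons (alt_word i j t) i).
Proof.
case: m => // m Hm /andP [_ Hmt] Hred.
set c := if odd m then i else j.
set A := if odd m then alt_word i j (t - m.+1) else alt_word j i (t - m.+1).
have Esplit : rcons (alt_word i j t) i = A ++ [:: c] ++ alt_word j i m.+1.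
  rewrite -alt_word_rcons (_ : t.+1 = (t - m.+1) + m.+2)%N; last by lia.
  by rewrite alt_word_addn /A /c /=; case: (odd m).
have Hshort : weq M (A ++ [:: c] ++ alt_word j i m.+1) (A ++ alt_word i j m).
  have Ec : alt_word i j m.+1 = [:: c] ++ alt_word i j m by [].
  apply/weq_catl/(weq_trans (weq_catl [:: c] (weq_braid (relator_alt_word (mcox_sym Hm))))).
  by rewrite Ec; exact: weq_cancel M [::] c _.
have := wlen_min (weq_sym Hshort); move: Hred; rewrite /reduced Esplit => ->.
by rewrite !size_cat /A !fun_if !size_alt_word if_same /=; lia.
Qed.

Lemma alternating_word i j l : {subset l <= [:: i; j]} ->
  sorted (fun x y => x != y) (rcons l i) -> l = alt_word i j (size l).
Proof.
elim: l => // x l IH Hsub Hs.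
have Hl : l = alt_word i j (size l).
  apply: IH; first by move=> z Hz; apply: Hsub; rewrite inE Hz orbT.
  by move: Hs; rewrite rcons_cons /= => /path_sorted.
rewrite /= -Hl; congr cons.
have := Hsub x (mem_head _ _); rewrite !inE.
case: l Hl {IH Hsub} Hs => [_ /andP [Hxi _]|y l [Hy _] /andP [Hxy _]].
  by rewrite (negbTE Hxi) => /eqP.
by move: Hxy; rewrite Hy /=; case: (odd (size l)) => /negbTE ->; rewrite ?orbF => /eqP.
Qed.

Lemma reduced_dihedral i j u : {subset u <= [:: i; j]} -> reduced M (rcons u i) ->
  u = alt_word i j (size u) /\ forall k, mcox M i j k -> (size u < k)%N.
Proof.
move=> Hsub Hred; have Hu := alternating_word Hsub (reduced_neq_adjacent Hred).
split=> // k Hk; rewrite ltnNge; apply/negP => Hle.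
have Hk0 : (0 < k)%N by case: Hk => [[_ ->]|[_ [Hk2 _]]] //; lia.
by apply: (alt_word_not_reduced (t := size u) Hk); [rewrite Hk0 | rewrite -Hu].
Qed.

End AlternatingWords.

Section ReflectionAction.
Variables (R : realType) (n : nat) (M : 'M[R]_n).
Implicit Types (u w : seq 'I_n) (i k l : 'I_n) (a b : 'rV[R]_n).

Definition coroot k a : R := \sum_l M k l * a 0 l.

Lemma coroot_alpha k i : coroot k (alpha R i) = M k i.
Proof.
rewrite /coroot (bigD1 i) //= big1 => [|l /negbTE Hl]; last by rewrite mxE Hl mulr0.
by rewrite mxE eqxx mulr1 addr0.
Qed.

Lemma corootD k a b : coroot k (a + b) = coroot k a + coroot k b.
Proof. by rewrite /coroot -big_split; apply: eq_bigr => l _; rewrite mxE mulrDr. Qed.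

Lemma corootZ k c a : coroot k (c *: a) = c * coroot k a.
Proof. by rewrite /coroot mulr_sumr; apply: eq_bigr => l _; rewrite mxE mulrCA. Qed.

Lemma sactE i a : sact M i a = a - coroot i a *: alpha R i.
Proof. by []. Qed.

Lemma sactD i a b : sact M i (a + b) = sact M i a + sact M i b.
Proof. by rewrite !sactE corootD scalerDl opprD addrACA. Qed.

Lemma sactZ i c a : sact M i (c *: a) = c *: sact M i a.
Proof. by rewrite !sactE corootZ scalerBr scalerA. Qed.

Lemma sact_coord i a l : l != i -> sact M i a 0 l = a 0 l.
Proof. by move/negbTE => Hl; rewrite sactE !mxE Hl mulr0 subr0. Qed.

Lemma sact_id i a : coroot i a = 0 -> sact M i a = a.
Proof. by rewrite sactE => ->; rewrite scale0r subr0. Qed.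

Lemma wact_cat u w a : wact M (u ++ w) a = wact M u (wact M w a).
Proof. exact: foldr_cat. Qed.

Lemma wact_rcons w i a : wact M (rcons w i) a = wact M w (sact M i a).
Proof. by rewrite -cats1 wact_cat. Qed.

Lemma wactD w a b : wact M w (a + b) = wact M w a + wact M w b.
Proof. by elim: w => //= x w ->; rewrite sactD. Qed.

Lemma wactZ w c a : wact M w (c *: a) = c *: wact M w a.
Proof. by elim: w => //= x w ->; rewrite sactZ. Qed.

Lemma wactN w a : wact M w (- a) = - wact M w a.
Proof. by rewrite -scaleN1r wactZ scaleN1r. Qed.

Lemma wact_id w a : (forall k, k \in w -> coroot k a = 0) -> wact M w a = a.
Proof.
elim: w => //= x w IH Hw; rewrite IH => [|k Hk]; last by apply: Hw; rewrite inE Hk orbT.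
by apply/sact_id/Hw; rewrite inE eqxx.
Qed.

Hypothesis HMii : forall i, M i i = 2.

Lemma sact_alpha i : sact M i (alpha R i) = - alpha R i.
Proof. by rewrite sactE coroot_alpha HMii scaler_nat mulr2n opprD addNKr. Qed.

Lemma sactK i : involutive (sact M i).
Proof.
move=> a; rewrite [X in sact M i X]sactE sactD -scaleNr sactZ sact_alpha.
by rewrite scaleNr scalerN opprK sactE subrK.
Qed.

Lemma wact_revK w : cancel (wact M w) (wact M (rev w)).
Proof. by elim: w => //= x w IH a; rewrite rev_cons wact_rcons sactK IH. Qed.

Lemma wact_revKV w : cancel (wact M (rev w)) (wact M w).
Proof. by have := wact_revK (rev w); rewrite revK. Qed.

Lemma alpha_neq0 i : alpha R i != 0.
Proof. by apply/eqP => /rowP /(_ i); rewrite !mxE eqxx => /eqP; rewrite oner_eq0. Qed.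

Lemma root_neq0 a : is_root M a -> a != 0.
Proof.
case=> w [i ->]; apply/eqP => Ha; apply: (negP (alpha_neq0 i)); apply/eqP.
rewrite -(wact_revK w (alpha R i)) Ha.
by have := wactZ (rev w) 0 0; rewrite !scale0r.
Qed.

Lemma root_wact w a : is_root M a -> is_root M (wact M w a).
Proof. by case=> u [k ->]; exists (w ++ u), k; rewrite wact_cat. Qed.

End ReflectionAction.

Section Chebyshev.
Variable R : realType.
Implicit Types (r c th : R) (k q : nat).

(* Chebyshev polynomials of the second kind: cheb r k = U_(k-1)(r/2). *)
Fixpoint cheb r k : R :=
  match k with
  | 0 => 0
  | 1 => 1
  | (S k' as k1).+1 => r * cheb r k1 - cheb r k'
  end.

(* The coordinates along the dihedral orbit of alpha_i (wact_alt_word_alpha):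
   cheb r with the factor r removed from the even terms, so that only c = r^2
   occurs (cheb_dcoef) and no square root of M_ij M_ji is needed. *)
Fixpoint dcoef c k : R :=
  match k with
  | 0 => 0
  | 1 => 1
  | (S k' as k1).+1 => (if odd k' then c else 1) * dcoef c k1 - dcoef c k'
  end.

Lemma chebSS r k : cheb r k.+2 = r * cheb r k.+1 - cheb r k.
Proof. by []. Qed.

Lemma dcoefSS c k : dcoef c k.+2 = (if odd k then c else 1) * dcoef c k.+1 - dcoef c k.
Proof. by []. Qed.

Lemma cheb_dcoef r k : cheb r k = (if odd k then 1 else r) * dcoef (r ^+ 2) k.
Proof.
suff /(_ k) [] : forall k, cheb r k = (if odd k then 1 else r) * dcoef (r ^+ 2) k /\
  cheb r k.+1 = (if odd k.+1 then 1 else r) * dcoef (r ^+ 2) k.+1 by [].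
elim=> [|h [IH1 IH2]]; first by rewrite /= mulr0 mul1r.
split=> //; rewrite chebSS dcoefSS IH1 IH2 /=.
by case: (odd h) => /=; ring.
Qed.

Lemma cheb_ge0 r : 2 <= r -> forall q, 0 <= cheb r q.
Proof.
move=> Hr q; suff /(_ q) [] : forall q, 0 <= cheb r q /\ cheb r q <= cheb r q.+1 by [].
elim=> [|h [IH1 IH2]]; first by split; [|exact: ler01].
by split; [exact: le_trans IH2 | rewrite chebSS; nra].
Qed.

Lemma cheb_cos th : sin th != 0 -> forall q, cheb (2 * cos th) q = sin (q%:R * th) / sin th.
Proof.
move=> Hs q; suff /(_ q) [] : forall q, cheb (2 * cos th) q = sin (q%:R * th) / sin th /\
  cheb (2 * cos th) q.+1 = sin (q.+1%:R * th) / sin th by [].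
elim=> [|h [IH1 IH2]]; first by rewrite /= mul0r sin0 mul0r mul1r divff.
split=> //; rewrite chebSS IH1 IH2.
have -> : h.+2%:R * th = h.+1%:R * th + th by rewrite -addn1 natrD mulrDl mul1r.
have -> : h%:R * th = h.+1%:R * th - th by rewrite -addn1 natrD mulrDl mul1r addrK.
by rewrite !sinD sinN cosN; field.
Qed.

Section PiOverM.
Variable m : nat.
Hypothesis Hm : (2 <= m)%N.
Let th : R := pi / m%:R.

Let m_gt0 : (0 : R) < m%:R.
Proof. by rewrite ltr0n; lia. Qed.

Let th_gt0 : 0 < th.
Proof. by rewrite divr_gt0 // pi_gt0. Qed.

Let mulr_th q : (q <= m)%N -> q%:R * th <= pi.
Proof.
move=> Hq; rewrite /th mulrA ler_pdivrMr // mulrC ler_wpM2l ?ler_nat //.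
exact/ltW/pi_gt0.
Qed.

Lemma sin_pi_over_gt0 : 0 < sin th.
Proof.
apply: sin_gt0_pi; rewrite th_gt0 /th ltr_pdivrMr // ltr_pMr ?pi_gt0 // ltr1n; lia.
Qed.

Lemma cos_pi_over_ge0 : 0 <= cos th.
Proof.
have Hth : th <= pi / 2.
  by rewrite ler_pM2l ?pi_gt0 // lef_pV2 ?posrE ?ltr0n ?(ler_nat _ 2); lia.
by apply: cos_ge0_pihalf; apply/andP; split; have := pi_gt0 R; have := th_gt0; lra.
Qed.

Lemma sqr_cos_pi_over_lt1 : cos th ^+ 2 < 1.
Proof. by rewrite cos2sin2 gtrDl oppr_lt0 exprn_gt0 // sin_pi_over_gt0. Qed.

Lemma cheb_pi_over_ge0 q : (q <= m)%N -> 0 <= cheb (2 * cos th) q.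
Proof.
move=> Hq; have Hs := sin_pi_over_gt0.
rewrite cheb_cos ?gt_eqF //; apply: divr_ge0 (ltW Hs); apply: sin_ge0_pi.
by rewrite mulr_th // andbT mulr_ge0 ?ler0n ?ltW.
Qed.

Lemma cheb_pi_over_period : cheb (2 * cos th) m.*2.+1 = 1 /\ cheb (2 * cos th) m.*2 = 0.
Proof.
have Hs := sin_pi_over_gt0.
have Hmth : m%:R * th = pi by rewrite /th mulrC divfK ?gt_eqF.
have E2 : m.*2%:R * th = pi *+ 2 by rewrite -muln2 natrM mulrAC Hmth mulr_natr.
have E1 : m.*2.+1%:R * th = th + pi *+ 2 by rewrite -addn1 natrD mulrDl E2 mul1r addrC.
by rewrite !cheb_cos ?gt_eqF // E1 E2 sinD2pi sin2pi divff ?gt_eqF // mul0r.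
Qed.

End PiOverM.

Lemma fourcos2E m : fourcos2 R m = (2 * cos (pi / m%:R)) ^+ 2.
Proof. by rewrite /fourcos2 exprMn -natrX. Qed.

Lemma fourcos2_2 : fourcos2 R 2 = 0.
Proof. by rewrite /fourcos2 cos_pihalf expr0n mulr0. Qed.

End Chebyshev.

Section RankTwo.
Variables (R : realType) (n : nat) (M : 'M[R]_n).
Hypothesis HMii : forall i, M i i = 2.
Hypothesis Hnz : forall i j, M i j != 0 <-> M j i != 0.
Variables i j : 'I_n.
Local Notation c := (M i j * M j i).

Definition span2 (p q : R) : 'rV[R]_n := p *: alpha R i + q *: alpha R j.

Lemma alpha_span2 : alpha R i = span2 1 0.
Proof. by rewrite /span2 scale1r scale0r addr0. Qed.

Lemma coroot_span2 k p q : coroot M k (span2 p q) = p * M k i + q * M k j.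
Proof. by rewrite corootD !corootZ !coroot_alpha. Qed.

Lemma sact_span2_l p q : sact M i (span2 p q) = span2 (- M i j * q - p) q.
Proof.
apply/rowP => l; rewrite sactE coroot_span2 HMii !mxE.
by case: (l == i); case: (l == j); rewrite /=; ring.
Qed.

Lemma sact_span2_r p q : sact M j (span2 p q) = span2 p (- M j i * p - q).
Proof.
apply/rowP => l; rewrite sactE coroot_span2 HMii !mxE.
by case: (l == i); case: (l == j); rewrite /=; ring.
Qed.

Lemma wact_alt_word_alpha t :
  wact M (alt_word i j t) (alpha R i) =
  if odd t then span2 (dcoef c t) (- M j i * dcoef c t.+1)
  else span2 (dcoef c t.+1) (- M j i * dcoef c t).
Proof.
elim: t => [|t IH]; first by rewrite /= mulr0 alpha_span2.
rewrite [LHS]/= IH dcoefSS /=; case: (odd t) => /=.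
- by rewrite sact_span2_l; congr span2; ring.
- by rewrite sact_span2_r; congr span2; ring.
Qed.

Lemma Mji_eq0 : c = 0 -> M j i = 0.
Proof.
move=> /eqP; rewrite mulf_eq0 => /orP [/eqP Hij|/eqP //].
by apply/eqP; apply: contraT => /Hnz; rewrite Hij eqxx.
Qed.

Lemma wact_alt_word_alpha_ge0 t r : 0 <= r -> r ^+ 2 = c -> M j i <= 0 ->
  (forall q, (q <= t.+1)%N -> 0 <= cheb r q) ->
  exists p q, [/\ 0 <= p, 0 <= q & wact M (alt_word i j t) (alpha R i) = span2 p q].
Proof.
move=> Hr Hrc Hji Hcheb.
have Hodd k : odd k -> (k <= t.+1)%N -> 0 <= dcoef c k.
  by move=> Hk /Hcheb; rewrite cheb_dcoef Hk mul1r Hrc.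
have Heven k : ~~ odd k -> (k <= t.+1)%N -> 0 <= - M j i * dcoef c k.
  move=> Hk /Hcheb; rewrite cheb_dcoef (negbTE Hk) Hrc.
  have [Hr0|Hr0] := eqVneq r 0.
    by rewrite Mji_eq0 ?oppr0 ?mul0r // -Hrc Hr0 expr2 mul0r.
  by rewrite pmulr_rge0 ?lt_def ?Hr0 // => Hd; rewrite mulr_ge0 ?oppr_ge0.
rewrite wact_alt_word_alpha; case: ifP => Ht.
- exists (dcoef c t), (- M j i * dcoef c t.+1); split=> //.
  + by apply: Hodd.
  + by apply: Heven => //=; rewrite Ht.
- exists (dcoef c t.+1), (- M j i * dcoef c t); split=> //.
  + by apply: Hodd => //=; rewrite Ht.
  + by apply: Heven => //; rewrite Ht.
Qed.

Lemma wact_alt_word_alpha_period k r : r ^+ 2 = c ->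
  cheb r k.*2.+1 = 1 -> cheb r k.*2 = 0 -> wact M (alt_word i j k.*2) (alpha R i) = alpha R i.
Proof.
move=> Hrc; rewrite wact_alt_word_alpha !cheb_dcoef Hrc oddS odd_double.
set d := dcoef c; rewrite /= mul1r => -> /eqP; rewrite mulf_eq0 alpha_span2 => H0.
congr span2.
case/orP: H0 => /eqP H0; last by rewrite H0 mulr0.
by rewrite Mji_eq0 ?oppr0 ?mul0r // -Hrc H0 expr2 mul0r.
Qed.

Lemma span2_complement y : c != 4 ->
  exists p q, coroot M i (y - span2 p q) = 0 /\ coroot M j (y - span2 p q) = 0.
Proof.
(* The rank-two Cartan matrix [[2, M i j], [M j i, 2]] has determinant 4 - c. *)
move=> Hc4; have H4c : 4 - c != 0 by rewrite subr_eq0 eq_sym.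
exists ((2 * coroot M i y - M i j * coroot M j y) / (4 - c)),
       ((2 * coroot M j y - M j i * coroot M i y) / (4 - c)).
rewrite -scaleN1r !corootD !corootZ !coroot_span2 !HMii.
by split; field.
Qed.

End RankTwo.

Section Relators.
Variables (R : realType) (n : nat) (M : 'M[R]_n).
Hypothesis HMii : forall i, M i i = 2.
Hypothesis Hnz : forall i j, M i j != 0 <-> M j i != 0.

Lemma wact_dihedral_relator_alpha i j k : (2 <= k)%N -> M i j * M j i = fourcos2 R k ->
  wact M (alt_word i j k.*2) (alpha R i) = alpha R i.
Proof.
move=> Hk Hc; have [H1 H0] := cheb_pi_over_period R Hk.
by apply: (wact_alt_word_alpha_period HMii Hnz (r := 2 * cos (pi / k%:R))); rewrite // -fourcos2E.
Qed.

Lemma wact_dihedral_relator i j k : (2 <= k)%N -> M i j * M j i = fourcos2 R k ->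
  wact M (alt_word i j k.*2) =1 id.
Proof.
(* As c <> 4, V splits as span(alpha_i, alpha_j) plus the common kernel of the
   two coroots; F fixes the first summand by the rank-two computation and the
   second one pointwise. *)
move=> Hk Hc y; set F := alt_word i j k.*2.
have Fi : wact M F (alpha R i) = alpha R i by apply: wact_dihedral_relator_alpha.
have Fj : wact M F (alpha R j) = alpha R j.
  have Erev : rev F = alt_word j i k.*2 by rewrite rev_alt_word odd_double.
  rewrite -{1}(wact_dihedral_relator_alpha (i := j) (j := i) Hk) ?(mulrC (M j i)) //.
  by rewrite -Erev wact_revKV.
have Hc4 : M i j * M j i != 4.
  by rewrite Hc /fourcos2; apply/eqP; have := sqr_cos_pi_over_lt1 R Hk; lra.
have [p [q [Hzi Hzj]]] := span2_complement HMii y Hc4.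
rewrite -(subrK (span2 i j p q) y) wactD [X in _ + X]wactD !wactZ Fi Fj.
congr (_ + _); apply: wact_id => x /mem_alt_word; rewrite !inE.
by case/orP => /eqP ->.
Qed.

Lemma wact_relator r : relator M r -> wact M r =1 id.
Proof.
case=> [x [z [k [Hm ->]]]] y; rewrite flatten_nseq_alt_word.
case: Hm => [[-> ->]|[_ [Hk Hc]]]; first exact: sactK.
exact: wact_dihedral_relator.
Qed.

Lemma wact_weq u v : weq M u v -> wact M u =1 wact M v.
Proof.
elim=> [//|u0 v0 _ IH y|u0 v0 t0 _ IH1 _ IH2 y|u0 r v0 Hr y].
- by rewrite IH.
- by rewrite IH1 IH2.
- by rewrite !wact_cat (wact_relator Hr).
Qed.

End Relators.

Section PositiveRoots.
Variables (R : realType) (n : nat) (M : 'M[R]_n).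
Hypothesis HM : is_EGCM M.
Implicit Types (u w : seq 'I_n) (i j : 'I_n) (a b : 'rV[R]_n).

Let HMii : forall i, M i i = 2. Proof. by case: HM. Qed.
Let HMneg : forall i j, i != j -> M i j <= 0. Proof. by case: HM => _ []. Qed.
Let HMnz : forall i j, M i j != 0 <-> M j i != 0. Proof. by case: HM => _ [_ []]. Qed.

Lemma egcm_product_cases i j : i != j ->
  4 <= M i j * M j i \/ exists m, (2 <= m)%N /\ M i j * M j i = fourcos2 R m.
Proof.
move=> Hij; have [Hc0|Hc0] := eqVneq (M i j * M j i) 0.
  by right; exists 2%N; rewrite Hc0 fourcos2_2.
case: HM => _ [_ [_ /(_ i j Hij Hc0)]] [|[m [Hm Hc]]]; first by left.
by right; exists m; split=> //; lia.
Qed.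

Lemma wact_alt_word_alpha_nonneg i j t : i != j -> (forall k, mcox M i j k -> (t < k)%N) ->
  exists p q, [/\ 0 <= p, 0 <= q & wact M (alt_word i j t) (alpha R i) = span2 i j p q].
Proof.
move=> Hij Ht; have Hji : M j i <= 0 by apply: HMneg; rewrite eq_sym.
have [H4|[m [Hm Hc]]] := egcm_product_cases Hij.
- have [r Hr0 Hr] : exists2 r : R, 0 <= r & r ^+ 2 = M i j * M j i.
    by exists (Num.sqrt (M i j * M j i)); rewrite ?sqrtr_ge0 ?sqr_sqrtr // (le_trans _ H4).
  have Hr2 : 2 <= r by nra.
  by apply: (wact_alt_word_alpha_ge0 HMii HMnz Hr0 Hr Hji) => q _; apply: cheb_ge0.
- have Htm : (t < m)%N by apply: Ht; right.
  apply: (wact_alt_word_alpha_ge0 HMii HMnz (r := 2 * cos (pi / m%:R))) => //.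
  + by rewrite mulr_ge0 ?cos_pi_over_ge0.
  + by rewrite Hc fourcos2E.
  + by move=> q Hq; apply: cheb_pi_over_ge0 => //; lia.
Qed.

Lemma wact_alpha_ge0 w i : (wlen M w < wlen M (rcons w i))%N ->
  forall l, 0 <= wact M w (alpha R i) 0 l.
Proof.
(* Pick a right descent j of w and factor w = v vI through <s_i, s_j>: vI is an
   alternating word shorter than m_ij, so vI.alpha_i is a nonnegative combination
   of alpha_i and alpha_j, both sent to nonnegative vectors by v (induction). *)
have [N] := ubnP (wlen M w); elim: N w i => // N IH w i /ltnSE HN Hi l.
have [Hw0|/wlen_descent [j Hj]] := posnP (wlen M w).
  by rewrite -(wact_weq HMii HMnz (weq_wlen_eq0 Hw0)) mxE; case: eqP.
have Hij : i != j by apply: contraTneq Hi => ->; rewrite -leqNgt ltnW.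
have [v [vI [Hsub Hweq Hlen Hlt Hgrow]]] := parabolic_factor i Hj.
have Hred : reduced M (rcons vI i).
  have Ewi : weq M (v ++ rcons vI i) (rcons w i) by rewrite -!cats1 catA; apply: weq_catr.
  have := wlen_cat M v (rcons vI i); have := wlen_size M (rcons vI i).
  rewrite /reduced (wlen_weq Ewi) size_rcons; have := wlen_rcons M w i; lia.
have [EvI Hbound] := reduced_dihedral Hsub Hred.
have [p [q [Hp Hq Hspan]]] := wact_alt_word_alpha_nonneg Hij Hbound.
rewrite -(wact_weq HMii HMnz Hweq) wact_cat EvI Hspan wactD !wactZ !mxE.
by rewrite addr_ge0 // mulr_ge0 // IH ?Hgrow ?inE ?eqxx ?orbT //; lia.
Qed.

Lemma root_nonneg_or_nonpos a : is_root M a -> (forall l, 0 <= a 0 l) \/ (forall l, a 0 l <= 0).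
Proof.
case=> w [i ->]; have [Hwi|Hwi] := wlen_rcons M w i.
  by left; apply: wact_alpha_ge0; rewrite Hwi.
right=> l; have := @wact_alpha_ge0 (rcons w i) i _ l.
rewrite wact_rcons sact_alpha // wactN mxE oppr_ge0; apply.
by rewrite (wlen_weq (weq_rcons2 M w i)) Hwi.
Qed.

Lemma root_not_nonneg_nonpos a : is_root M a -> (forall l, 0 <= a 0 l) -> ~ (forall l, a 0 l <= 0).
Proof.
move=> Ha Hpos Hneg; have /eqP := root_neq0 HMii Ha; apply.
by apply/rowP => l; rewrite mxE; apply/le_anti; rewrite Hpos Hneg.
Qed.

Definition alpha_multiple i a := exists K : R, a = K *: alpha R i.

Lemma coord_scale_alpha i (K : R) : (K *: alpha R i) 0 i = K.
Proof. by rewrite !mxE eqxx mulr1. Qed.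

Lemma sact_pos_root i b : is_pos_root M b -> ~ alpha_multiple i b ->
  is_pos_root M (sact M i b).
Proof.
move=> [Hb Hpos] Hmul.
have [l /andP [Hli Hbl]] : exists l, (l != i) && (b 0 l != 0).
  apply/existsP/contraT => /existsPn Hzero; exfalso; apply: Hmul; exists (b 0 i).
  apply/rowP => l; rewrite !mxE; case: eqVneq => [->|Hli]; first by rewrite mulr1.
  by move: (Hzero l); rewrite Hli /= negbK mulr0 => /eqP.
have Hsb : is_root M (sact M i b) by apply: (root_wact [:: i]).
split=> //; case: (root_nonneg_or_nonpos Hsb) => // Hneg.
have := Hneg l; rewrite sact_coord // => Hle.
by move: Hbl; rewrite eq_le Hle Hpos.
Qed.

Lemma NM_not_alpha_multiple u i b : (wlen M u < wlen M (rcons u i))%N ->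
  NM M u b -> ~ alpha_multiple i b.
Proof.
move=> Hui [[_ Hpos] [Hr Hneg]] [K Hb].
have HK : 0 <= K by rewrite -(coord_scale_alpha i K) -Hb.
apply: (root_not_nonneg_nonpos Hr) Hneg => l.
by rewrite Hb wactZ mxE mulr_ge0 // wact_alpha_ge0.
Qed.

Lemma NM_rcons u i a : (wlen M u < wlen M (rcons u i))%N ->
  NM M (rcons u i) a <-> NM M u (sact M i a) \/ (alpha_multiple i a /\ is_pos_root M a).
Proof.
move=> Hui; rewrite /NM wact_rcons; split.
  move=> [Ha Hneg]; have [Hmul|Hmul] := pselect (alpha_multiple i a); first by right.
  by left; split=> //; apply: sact_pos_root.
case=> [[Hpos Hneg]|[[K Ha] [Hr Hpos]]].
  split=> //; rewrite -(sactK HMii i a); apply: sact_pos_root => //.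
  by apply: NM_not_alpha_multiple Hui _; split.
have HK : 0 <= K by rewrite -(coord_scale_alpha i K) -Ha.
split; first by split.
split; first by apply: root_wact; apply: (root_wact [:: i]).
move=> l; rewrite Ha sactZ sact_alpha // scalerN wactN wactZ !mxE oppr_le0.
by rewrite mulr_ge0 // wact_alpha_ge0.
Qed.

Lemma NM_reduced_enum (f : 'I_n -> nat) (Hf : forall x, fcount M x (f x)) u : reduced M u ->
  exists s, [/\ uniq s, forall a, a \in s <-> NM M u a & size s = sumn (map f u)].
Proof.
elim/last_ind: u => [|u i IH] Hred.
  exists [::]; split=> // a; split=> // [[[Hr Hpos] [_ Hneg]]].
  by case: (root_not_nonneg_nonpos Hr Hpos Hneg).
have [Hu _] : reduced M u /\ reduced M [:: i] by apply: reduced_cat; rewrite cats1.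
have Hui := reduced_wlen_rcons Hred.
have [s [Hs HsN Hsize]] := IH Hu; have [t [Ht [Htsize HtN]]] := Hf i.
have sactI := can_inj (sactK HMii i).
have mem_sact a : (a \in map (sact M i) s) = (sact M i a \in s).
  by rewrite -{1}(sactK HMii i a) mem_map.
exists (map (sact M i) s ++ t); split.
- rewrite cat_uniq (map_inj_uniq sactI) Hs Ht andbT /=.
  apply/hasPn => a /HtN [[K Ha] _]; rewrite mem_sact; apply/negP => /HsN HN.
  apply: (NM_not_alpha_multiple Hui HN); exists (- K).
  by rewrite Ha sactZ sact_alpha // scalerN scaleNr.
- move=> a; rewrite mem_cat mem_sact NM_rcons // -HsN -HtN.
  exact: (iff_sym (rwP orP)).
- by rewrite size_cat size_map Hsize Htsize map_rcons sumn_rcons.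
Qed.

Lemma NM_enum (f : 'I_n -> nat) (Hf : forall x, fcount M x (f x)) w :
  exists u s, [/\ size u = wlen M w, uniq s, forall a, a \in s <-> NM M w a
                & size s = sumn (map f u)].
Proof.
have [u [Hu Hsize]] := wlen_witness M w.
have Hred : reduced M u by rewrite /reduced (wlen_weq Hu) Hsize.
have [s [Hs HsN Hssize]] := NM_reduced_enum Hf Hred.
exists u, s; split=> // a; rewrite HsN /NM.
by rewrite (wact_weq HMii HMnz Hu).
Qed.

End PositiveRoots.

Lemma sumn_map_bounds (T : Type) (f : T -> nat) (a b : nat) (s : seq T) :
  (forall x, a <= f x)%N -> (forall x, f x <= b)%N ->
  (a * size s <= sumn (map f s) <= b * size s)%N.
Proof.
move=> Ha Hb; elim: s => [|x s /andP [IHa IHb]] /=; first by rewrite !muln0.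
by rewrite !mulnS !leq_add.
Qed.

Unset Implicit Arguments. Set Strict Implicit.

Theorem proposition4p9 (R : realType) (n : nat) (M : 'M[R]_n)
  (HM : is_EGCM M) (Hcyc : unital_OA_cyclic M)
  (f : 'I_n -> nat) (Hf : forall x, fcount M x (f x))
  (f1 f2 : nat)
  (Hf1 : (exists x, f x = f1) /\ forall x, (f1 <= f x)%N)
  (Hf2 : (exists x, f x = f2) /\ forall x, (f x <= f2)%N) :
  forall w : seq 'I_n,
    exists s : seq 'rV[R]_n,
      uniq s /\ (forall a, a \in s <-> NM M w a) /\
      (f1 * wlen M w <= size s <= f2 * wlen M w)%N.
Proof.
(* Unital OA-cyclicity is what makes the paper's f_(Gamma',M') well defined;
   here the counts are supplied node by node by Hf. *)
move=> w; have [u [s [Hu Hs HsN Hsize]]] := NM_enum HM Hf w.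
exists s; split=> //; split=> //.
by rewrite Hsize -Hu; apply: sumn_map_bounds; [exact: Hf1.2 | exact: Hf2.2].
Qed.
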